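(* In the depth-3 instance with the shadow distribution described below, for $m$ sufficiently large, for every event $\mathcal E$ of the form $\{e_1\in A\}$ or $\{e_1\notin A\}$ with $e_1\in E$ and $\mathbb P[\mathcal E]>0$, and for every vertex $v$, we have $\mathbb E[|\delta^+(v)\cap A|\mid\mathcal E]\ge\Omega(1/m^4)\cdot\mathbb E[|\delta^+(v)\cap A'|\mid\mathcal E]$, where $|\delta^+(v)\cap A'|$ counts edges of $\delta^+(v)$ with their multiplicity in $A'$.
   Context: Depth-3 instance: fix a small constant $\rho>0$ and a large integer $m$ with $\rho m\in\mathbb N$, ground set $[m]$. Layers: $L_0=\{s\}$; $L_1$ has one vertex $u$ for each $S_u\subseteq[m]$ with $|S_u|=\rho m$; $L_2$ one vertex for each subset of size $2\rho m$; $L_3$ (the sinks) one vertex for each subset of size $\rho m$. Edges: $s$ to every vertex of $L_1$; $(u,v)$, $u\in L_1,v\in L_2$, iff $S_u\subseteq S_v$; $(u,v)$, $u\in L_2,v\in L_3$, iff $S_v\subseteq S_u$. For $e=(u,v)$ write $S_e=S_v$ and $e\in L_i$ if $v\in L_i$; $D(e)$ is the set of edges $(a,b)$ with $a$ reachable (possibly trivially) from the endpoint of $e$. $x_e=\binom{(1-\rho)m}{\rho m}^{-1}$ for $e\in L_1\cup L_3$ and $x_e=\binom{(1-\rho)m}{\rho m}^{-1}\binom{2\rho m}{\rho m}^{-1}$ for $e\in L_2$. Subtree solutions: for $e\in L_1$, $x^{(e)}_{e'}=1$ if $e'=e$; $\binom{2\rho m}{\rho m}^{-1}$ if $e'\in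 L_2\cap D(e)$; $\frac{\binom{(1-\rho)m}{\rho m}}{\binom{m}{\rho m}}\binom{m-2\rho m+|S_{e'}\cap S_e|}{|S_{e'}\cap S_e|}^{-1}$ if $e'\in L_3\cap D(e)$; $0$ otherwise. For $e\in L_2$: $x^{(e)}_{e'}=1$ if $e'=e$ or $e'\in L_3\cap D(e)$, else $0$. For $e\in L_3$: $x^{(e)}_{e'}=1$ iff $e'=e$. Shadow distribution: random $S$ containing each edge $e$ independently with probability $x_e$; for each $e\in S$ independently a random $S_e$ containing each edge $e'$ independently with probability $x^{(e)}_{e'}$; $A=\bigcup_{e\in S}S_e$, and $A'$ is the multiset union of the $S_e$, $e\in S$ (an edge appears in $A'$ as many times as the number of $e\in S$ with that edge in $S_e$). *)

From HB Require Import structures.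
From mathcomp Require Import all_boot all_order all_algebra.
Set Implicit Arguments. Unset Strict Implicit. Unset Printing Implicit Defensive.
Import Order.TTheory GRing.Theory Num.Theory.
Local Open Scope ring_scope.

(* A vertex is a pair (layer, subset of [m]); only "valid" pairs are vertices. *)
Definition Vtx (m : nat) := ('I_4 * {set 'I_m})%type.
Definition Edg (m : nat) := (Vtx m * Vtx m)%type.

Section Inst.
Variables (m k : nat).

(* k = rho*m.  L0 = {(0,set0)} = {s}; L1: k-sets; L2: 2k-sets; L3: k-sets. *)
Definition valid (v : Vtx m) : bool :=
  match nat_of_ord v.1 with
  | 0 => v.2 == set0
  | 1 => #|v.2| == k
  | 2 => #|v.2| == k.*2
  | _ => #|v.2| == k
  end.

Definition adj : rel (Vtx m) := fun a b =>
  [&& valid a, valid b &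
   [|| ((a.1 : nat) == 0%N) && ((b.1 : nat) == 1%N),
       [&& (a.1 : nat) == 1%N, (b.1 : nat) == 2%N & a.2 \subset b.2]
     | [&& (a.1 : nat) == 2%N, (b.1 : nat) == 3%N & b.2 \subset a.2]]].

Definition isE (e : Edg m) : bool := adj e.1 e.2.

Definition elayer (e : Edg m) : nat := e.2.1.

Definition Sof (e : Edg m) : {set 'I_m} := e.2.2.

Definition Dset (e : Edg m) : pred (Edg m) :=
  fun e' => isE e' && connect adj e.2 e'.1.

Variable R : realFieldType.

Definition xw (e : Edg m) : R :=
  if isE e then
    (if elayer e == 2%N then ('C(m - k, k)%:R * 'C(k.*2, k)%:R)^-1
     else ('C(m - k, k)%:R)^-1)
  else 0.

Definition xs (e e' : Edg m) : R :=
  if ~~ (isE e && isE e') then 0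
  else if e' == e then 1
  else if elayer e == 1%N then
    (if Dset e e' then
       (if elayer e' == 2%N then ('C(k.*2, k)%:R)^-1
        else if elayer e' == 3%N then
          let j := #|Sof e' :&: Sof e| in
          'C(m - k, k)%:R / 'C(m, k)%:R / 'C(m - k.*2 + j, j)%:R
        else 0)
     else 0)
  else if elayer e == 2%N then
    (if Dset e e' && (elayer e' == 3%N) then 1 else 0)
  else 0.

(* Outcomes: the set S and, for every edge e, the set S_e (the S_e with
   e \notin S are sampled too but are irrelevant; this gives the same
   joint law of (S, (S_e)_{e in S})). *)
Definition Omega := ({set Edg m} * {ffun Edg m -> {set Edg m}})%type.

Definition weight (om : Omega) : R :=
  (\prod_(e : Edg m) (if e \in om.1 then xw e else 1 - xw e)) *
  \prod_(e : Edg m) \prod_(e' : Edg m)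
     (if e' \in om.2 e then xs e e' else 1 - xs e e').

Definition Aset (om : Omega) : {set Edg m} := \bigcup_(e in om.1) om.2 e.

Definition multA' (om : Omega) (e' : Edg m) : nat :=
  #|[set e in om.1 | e' \in om.2 e]|.

Definition cntA (v : Vtx m) (om : Omega) : nat :=
  #|[set e' in Aset om | isE e' && (e'.1 == v)]|.
Definition cntA' (v : Vtx m) (om : Omega) : nat :=
  (\sum_(e' : Edg m | isE e' && (e'.1 == v)) multA' om e')%N.

Definition event (e1 : Edg m) (b : bool) (om : Omega) : bool :=
  (e1 \in Aset om) == b.

Definition Prob (ev : Omega -> bool) : R :=
  \sum_(om : Omega) weight om * (ev om)%:R.

Definition CondE (X : Omega -> nat) (ev : Omega -> bool) : R :=
  (\sum_(om : Omega) weight om * (X om)%:R * (ev om)%:R) / Prob ev.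

End Inst.

From mathcomp Require Import all_boot all_order all_algebra.
From mathcomp Require Import ring lra zify.
Set Implicit Arguments. Unset Strict Implicit. Unset Printing Implicit Defensive.
Import Order.TTheory GRing.Theory Num.Theory.

(* The ratio is in fact bounded by a constant.  Since [A'] is the sum of the [S_h] over
   [h] in [S], [cntA'] is the sum of the terms [1[h in S] * |delta+(v) cap S_h|], each at
   most [cntA].  If [v] is not in layer 2, or [k <= 3], every out-edge of [v] lies in at
   most 41 of the sets [S_h], so [cntA' <= 41 cntA] pointwise.  Otherwise let [H] be the
   set of edges [h] whose [S_h] can contain [e1] or an out-edge of [v]: with
   [C = 'C(2k, k)] there are at most [(C + 1)(2C + 1)] of them, so for [rho < 1/20] their
   total weight [x] is at most 1/2.  The coins deciding [h in S] are independent of all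
   the rest, hence requiring [S] to avoid [H], except for [h] and possibly one edge that
   puts [e1] into [A], costs at most a factor 2, on [{e1 in A}] as on [{e1 notin A}].  On
   that event at most two edges of [H] lie in [S], which gives the factor 4. *)

(** * Binomial estimates *)

Lemma bin_leq_exp2 n k : 'C(n, k) <= 2 ^ n.
Proof.
elim: n k => [|n IHn] [|k] //; first by rewrite bin0 expn_gt0.
by rewrite binS expnS mul2n -addnn leq_add.
Qed.

Lemma ffact_scale c a b j : c * b <= a -> c ^ j * b ^_ j <= a ^_ j.
Proof.
move=> cba; elim: j => [|j IHj]; first by rewrite ffactn0.
rewrite !ffactnSr expnSr mulnACA leq_mul //.
by case: c {IHj} cba => [|c] cba; rewrite ?mul0n //; nia.
Qed.

Lemma bin_double_scale k : 9 ^ k * 'C(k.*2, k) <= 'C(19 * k, k).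
Proof. by rewrite -(leq_pmul2r (fact_gt0 k)) -mulnA !bin_ffact ffact_scale //; lia. Qed.

Lemma exp4_leq_exp9 k : 4 <= k -> 12 * 4 ^ k <= 9 ^ k.
Proof.
elim: k => // k IHk; rewrite leq_eqVlt => /orP[/eqP <- // | /IHk].
rewrite !expnS; nia.
Qed.

(* With [C = 'C(2k, k)], at most [(C + 1)(2C + 1)] edges can feed [e1] or an out-edge of
   a layer-2 vertex, each of weight at most [1 / 'C(m - k, k)]. *)
Lemma bin_contributors_leq m k : 4 <= k -> 20 * k <= m ->
  2 * ('C(k.*2, k) + 1) * ('C(k.*2, k).*2 + 1) <= 'C(m - k, k).
Proof.
move=> k4 km; set C := 'C(k.*2, k).
have C_gt0 : 0 < C by rewrite bin_gt0 -addnn leq_addr.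
have C_le : C <= 4 ^ k by rewrite (leq_trans (bin_leq_exp2 _ _)) // -mul2n expnM.
have := bin_double_scale k; have := exp4_leq_exp9 k4.
have : 'C(19 * k, k) <= 'C(m - k, k) by apply: leq_bin2l; lia.
rewrite -/C; nia.
Qed.

(** * The layered graph *)

Section Layers.
Variables (m k : nat).
Implicit Types (a c v : Vtx m) (e g : Edg m).

Lemma valid_card v : valid k v -> #|v.2| = nth 0 [:: 0; k; k.*2; k] v.1.
Proof.
by case: v => [[[|[|[|[|i]]]] // ?] B]; rewrite /valid /= => /eqP->; rewrite ?cards0.
Qed.

Lemma valid_card_leq v : valid k v -> #|v.2| <= k.*2.
Proof. by move/valid_card->; case: v => [[[|[|[|[|i]]]] ?] B] //=; rewrite -addnn leq_addr. Qed.

Lemma adj_layer a c : adj k a c ->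
  [/\ valid k a, valid k c, (c.1 : nat) = (a.1 : nat).+1,
      (a.1 : nat) = 1 -> a.2 \subset c.2 & (a.1 : nat) = 2 -> c.2 \subset a.2].
Proof.
case/and3P=> va vc /or3P[/andP[/eqP-> /eqP->] | /and3P[/eqP-> /eqP-> ?] | /and3P[/eqP-> /eqP-> ?]];
  by split.
Qed.

Lemma tail_layer_leq e : isE k e -> (e.1.1 : nat) <= 2.
Proof. by case/adj_layer=> _ _ l _ _; have := ltn_ord e.2.1; rewrite l. Qed.

(* Layers strictly increase along edges; a path from layer 1 to layer 2 is a single edge. *)
Lemma connect_adj a c : connect (adj k) a c ->
  c = a \/ (a.1 : nat) < c.1 /\ ((a.1 : nat) = 1 -> (c.1 : nat) = 2 -> a.2 \subset c.2).
Proof.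
case/connectP=> p + ->{c}; elim: p a => [|b p IHp] a /=; first by left.
case/andP=> /adj_layer[_ _ lb sub _] /IHp[->|[lt sub']]; right.
  by split=> [|/sub //]; rewrite lb.
by rewrite lb in lt; split=> [|la lc]; [exact: ltnW | move: lt; rewrite la lc].
Qed.

Definition out_edges v := [set e | isE k e && (e.1 == v)].

Definition draws (X : {set 'I_m}) := [set B : {set 'I_m} | B \subset X & #|B| == k].

Lemma card_out_edges_layer2 v : valid k v -> (v.1 : nat) = 2 ->
  #|out_edges v| <= 'C(k.*2, k).
Proof.
move=> vv v2; have cv : #|v.2| = k.*2 by rewrite valid_card // v2.
rewrite -cv -cards_draws.
apply: leq_trans (leq_imset_card (fun B => (v, (inord 3, B)) : Edg m) _).
apply/subset_leq_card/subsetP=> -[a [i B]].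
rewrite inE => /andP[/adj_layer[_ vB /= l _ sub] /eqP /= av]; subst a.
rewrite v2 in l sub; apply/imsetP; exists B; last by rewrite -[i]inord_val l.
by rewrite inE sub // (valid_card vB) /= l eqxx.
Qed.

(* The support of [xs]: [S_g] can contain [e] only if [feeds g e]. *)
Definition feeds g e : bool :=
  [&& isE k g, isE k e &
   [|| g == e, (elayer g == 1) && Dset k g e | [&& elayer g == 2, Dset k g e & elayer e == 3]]].

Definition contributors e := [set g | feeds g e].

Definition source : Vtx m := (inord 0, set0).

Lemma contributors_sub e : isE k e ->
  contributors e \subset e |: ([set (source, (inord 1, B)) | B in draws e.1.2] :|:
    (if elayer e == 3 then [set ((inord 1, B), e.1) | B in draws e.1.2] else set0)).
Proof.
move=> eE; apply/subsetP=> -[[i A] [j B]]; rewrite inE /feeds /Dset /elayer eE /=.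
case/andP=> /[dup] gE /adj_layer[vA vB /= l subA subB].
case/or3P=> [/eqP-> | /andP[/eqP j1 /connect_adj reach] | /and3P[/eqP j2 /connect_adj reach e3]].
- by rewrite setU11.
- have i0 : (i : nat) = 0 by rewrite j1 in l; case: l.
  have -> : A = set0 by apply: cards0_eq; rewrite (valid_card vA) i0.
  rewrite !inE; apply/orP; right; apply/orP; left; apply/imsetP; exists B.
    rewrite inE (valid_card vB) j1 eqxx andbT.
    have le2 := tail_layer_leq eE.
    case: reach => [-> | [lt sub]]; first exact: subxx.
    by apply: sub => //; move: lt le2; rewrite j1; lia.
  by rewrite /source -[i]inord_val -[j]inord_val i0 j1.
- have i1 : (i : nat) = 1 by rewrite j2 in l; case: l.
  have {}reach : e.1 = (j, B).
    by case: reach => // -[]; have := tail_layer_leq eE; rewrite j2 /=; lia.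
  rewrite e3 !inE; apply/orP; right; apply/orP; right; apply/imsetP; exists A.
    by rewrite inE reach subA // (valid_card vA) i1 eqxx.
  by rewrite reach -[i]inord_val i1.
Qed.

Lemma card_contributors e : isE k e ->
  #|contributors e| <= 1 + 'C(#|e.1.2|, k) + (elayer e == 3) * 'C(k.*2, k).
Proof.
move=> eE; apply: leq_trans (subset_leq_card (contributors_sub eE)) _.
rewrite cardsU1 -addnA leq_add ?leq_b1 //; apply: leq_trans (leq_card_setU _ _).1 _.
rewrite leq_add // -?cards_draws ?leq_imset_card //.
case: ifP => /eqP e3; last by rewrite cards0.
have [ve _ l _ _] := adj_layer eE; rewrite /elayer l in e3; case: e3 => e2.
have cX : #|e.1.2| = k.*2 by rewrite valid_card // e2.
by rewrite mul1n -cX -cards_draws leq_imset_card.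
Qed.

Lemma card_contributors_leq e : isE k e -> #|contributors e| <= 'C(k.*2, k).*2 + 1.
Proof.
move=> eE; apply: leq_trans (card_contributors eE) _.
have [ve _ _ _ _] := adj_layer eE.
have := leq_bin2l k (valid_card_leq ve).
by case: (elayer e == 3); rewrite ?mul1n ?mul0n; lia.
Qed.

Lemma card_contributors_out v e : e \in out_edges v ->
  #|contributors e| <= 1 + 'C(#|v.2|, k) + ((v.1 : nat) == 2) * 'C(k.*2, k).
Proof.
rewrite inE => /andP[eE /eqP ev]; apply: leq_trans (card_contributors eE) _.
by have [_ _ l _ _] := adj_layer eE; rewrite /elayer l ev.
Qed.

Lemma card_contributors_out_leq v e : valid k v -> ~~ (((v.1 : nat) == 2) && (4 <= k)) ->
  e \in out_edges v -> #|contributors e| <= 41.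
Proof.
move=> vv small /card_contributors_out/leq_trans; apply; rewrite (valid_card vv).
case: v vv small => [[[|[|[|[|i]]]] ?] B] //= _; rewrite ?binn ?bin0n //.
  by case: (k == 0).
by rewrite -ltnNge mul1n; case: k => [|[|[|[|]]]].
Qed.
End Layers.

(** * Products of independent coins *)

Local Open Scope ring_scope.

Lemma prod_1subr_ge (R : realDomainType) (I : Type) (r : seq I) (P : pred I) (a : I -> R) :
  (forall i, P i -> 0 <= a i <= 1) ->
  1 - \sum_(i <- r | P i) a i <= \prod_(i <- r | P i) (1 - a i).
Proof.
move=> a01; suff [] : 0 <= \sum_(i <- r | P i) a i /\
                      1 - \sum_(i <- r | P i) a i <= \prod_(i <- r | P i) (1 - a i) by [].
elim/big_rec2: _ => [|i s pr Pi [s0 le_pr]]; first by rewrite subr0.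
have /andP[ai0 ai1] := a01 i Pi; split; nra.
Qed.

Lemma ler_sum_subset (R : numDomainType) (T : finType) (A B : {set T}) (F : T -> R) :
  A \subset B -> (forall t, 0 <= F t) -> \sum_(t in A) F t <= \sum_(t in B) F t.
Proof.
by move=> AB F0; rewrite [leRHS](big_setID A) /= (setIidPr AB) lerDl sumr_ge0.
Qed.

Lemma disjoint_sum_le_card_le1 (R : numDomainType) (T : finType) (D S : {set T}) :
  [disjoint D & S]%:R + \sum_(g in D) (g \in S)%:R * [disjoint D :\ g & S]%:R
    <= (#|D :&: S| <= 1)%N%:R :> R.
Proof.
have [DS0 | [g0]] := set_0Vmem (D :&: S).
  rewrite -setI_eq0 DS0 eqxx cards0 big1 ?addr0 // => g gD.
  have : g \notin D :&: S by rewrite DS0 inE.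
  by rewrite inE gD /= => /negbTE->; rewrite mul0r.
rewrite inE => /andP[g0D g0S].
have meet (B : {set T}) : g0 \in B -> [disjoint B & S] = false.
  move=> g0B; apply/negbTE/negP => /disjoint_setI0 BS.
  by have := in_set0 g0; rewrite -BS !inE g0B g0S.
rewrite meet // add0r (bigD1 g0) //= big1 ?addr0 => [|g /andP[gD gg0]]; last first.
  by rewrite meet ?mulr0 // !inE eq_sym gg0.
rewrite g0S mul1r ler_nat; case: (boolP [disjoint _ & _]) => //= /disjoint_setI0 DS.
rewrite lt0b -(cards1 g0) subset_leq_card //; apply/subsetP=> x; rewrite !inE => /andP[xD xS].
apply/negPn/negP => xg0.
by have := in_set0 x; rewrite -DS !inE xg0 xD xS.
Qed.

Lemma card_bigcup_leq (I T : finType) (P : pred I) (F : I -> {set T}) :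
  (#|\bigcup_(i | P i) F i| <= \sum_(i | P i) #|F i|)%N.
Proof.
elim/big_rec2: _ => [|i U n _ le_Un]; first by rewrite cards0.
exact: leq_trans (leq_card_setU _ _).1 (leq_add (leqnn _) le_Un).
Qed.

Section BernoulliProduct.
Variables (R : realFieldType) (T B : finType) (p : T -> R) (q : B -> R).
Implicit Types (D : {set T}) (om : {set T} * B) (F G : {set T} * B -> R).

Definition bweight om : R := (\prod_t (if t \in om.1 then p t else 1 - p t)) * q om.2.

Definition expect F : R := \sum_om bweight om * F om.

Lemma eq_expect F G : (forall om, F om = G om) -> expect F = expect G.
Proof. by move=> FG; apply: eq_bigr => om _; rewrite FG. Qed.

Lemma expectD F G : expect (fun om => F om + G om) = expect F + expect G.
Proof. by rewrite /expect -big_split; apply: eq_bigr => om _; rewrite mulrDr. Qed.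

Lemma expectZ c F : expect (fun om => c * F om) = c * expect F.
Proof. by rewrite /expect mulr_sumr; apply: eq_bigr => om _; rewrite mulrCA. Qed.

Lemma expect_sum (I : finType) (P : pred I) (F : I -> {set T} * B -> R) :
  expect (fun om => \sum_(i | P i) F i om) = \sum_(i | P i) expect (F i).
Proof. by rewrite /expect exchange_big; apply: eq_bigr => om _; rewrite mulr_sumr. Qed.

Definition toggle t om := (if t \in om.1 then om.1 :\ t else t |: om.1, om.2).

Lemma in_toggle t s om :
  (s \in (toggle t om).1) = (if s == t then t \notin om.1 else s \in om.1).
Proof.
by rewrite /toggle; case: ifP => tS; rewrite !inE; case: eqP => [->|]; rewrite ?tS.
Qed.

Lemma in_toggle_neq t s om : s != t -> (s \in (toggle t om).1) = (s \in om.1).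
Proof. by move/negbTE=> st; rewrite in_toggle st. Qed.

Lemma toggleK t : involutive (toggle t).
Proof.
move=> [S b]; rewrite /toggle /=; congr (_, _).
by case tS: (t \in S); rewrite !inE eqxx /= ?setD1K ?setU1K ?tS.
Qed.

Lemma bweight_toggle t om : t \notin om.1 ->
  (1 - p t) * bweight (toggle t om) = p t * bweight om.
Proof.
move=> tS; rewrite /bweight /toggle /= (negbTE tS) (bigD1 t) // [in RHS](bigD1 t) //=.
rewrite setU11 (negbTE tS) (eq_bigr (fun s => if s \in om.1 then p s else 1 - p s)) => [|s st].
  by ring.
by rewrite !inE (negbTE st).
Qed.

Lemma expect_notin t F : (forall om, F (toggle t om) = F om) ->
  expect (fun om => F om * (t \notin om.1)%:R) = (1 - p t) * expect F.
Proof.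
move=> Ft; rewrite /expect (bigID (fun om => t \in om.1)) [in RHS](bigID (fun om => t \in om.1)) /=.
rewrite big1 ?add0r; last first.
  by move=> om ->; rewrite mulr0n !mulr0.
rewrite [X in _ = _ * (X + _)](reindex_inj (can_inj (toggleK t))).
rewrite [X in _ = _ * (X + _)](eq_bigl (fun om => t \notin om.1)) => [|om]; last first.
  by rewrite in_toggle eqxx.
rewrite mulrDr !mulr_sumr -big_split; apply: eq_bigr => om tS.
by rewrite Ft tS mulr1 /= mulrA bweight_toggle //; ring.
Qed.

Lemma expect_disjoint_seq (s : seq T) F : uniq s ->
  (forall t om, t \in s -> F (toggle t om) = F om) ->
  expect (fun om => F om * [disjoint s & om.1]%:R) = (\prod_(t <- s) (1 - p t)) * expect F.
Proof.
elim: s F => [|t s IHs] F /=.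
  by move=> _ _; rewrite big_nil mul1r; apply: eq_bigr => om _; rewrite disjoint0 mulr1.
case/andP=> ts us Fs; rewrite big_cons -mulrA -(IHs _ us) => [|t' om t's]; last first.
  by rewrite Fs // inE t's orbT.
rewrite -expect_notin => [|om]; last first.
  rewrite Fs ?mem_head // !disjoint_has (@eq_in_has _ _ [in om.1]) // => s' s's /=.
  by rewrite in_toggle; case: eqP => // st; rewrite -st s's in ts.
by apply: eq_bigr => om _; rewrite disjoint_cons -mulnb natrM; ring.
Qed.

Lemma expect_disjoint D F : (forall t om, t \in D -> F (toggle t om) = F om) ->
  expect (fun om => F om * [disjoint D & om.1]%:R) = (\prod_(t in D) (1 - p t)) * expect F.
Proof.
move=> FD; rewrite -big_enum -expect_disjoint_seq ?enum_uniq //; last first.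
  by move=> t om; rewrite mem_enum; apply: FD.
by apply: eq_bigr => om _; rewrite (eq_disjoint (mem_enum D)).
Qed.

Hypotheses (p01 : forall t, 0 <= p t <= 1) (q_ge0 : forall b, 0 <= q b).

Lemma bweight_ge0 om : 0 <= bweight om.
Proof.
rewrite mulr_ge0 ?prodr_ge0 // => t _.
by have /andP[? ?] := p01 t; case: ifP; rewrite ?subr_ge0.
Qed.

Lemma expect_ge0 F : (forall om, 0 <= F om) -> 0 <= expect F.
Proof. by move=> F0; rewrite sumr_ge0 // => om _; rewrite mulr_ge0 ?bweight_ge0. Qed.

Lemma ler_expect F G : (forall om, bweight om != 0 -> F om <= G om) ->
  expect F <= expect G.
Proof.
move=> FG; apply: ler_sum => om _.
have [->|/FG FGom] := eqVneq (bweight om) 0; first by rewrite !mul0r.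
by rewrite ler_wpM2l ?bweight_ge0.
Qed.

(* Avoiding [D] has probability [\prod_(t in D) (1 - p t) >= 1 - \sum_(t in D) p t >= 1/2]. *)
Lemma expect_le_disjoint D F : \sum_(t in D) p t <= 2^-1 -> (forall om, 0 <= F om) ->
  (forall t om, t \in D -> F (toggle t om) = F om) ->
  expect F <= 2 * expect (fun om => F om * [disjoint D & om.1]%:R).
Proof.
move=> pD F0 FD; rewrite expect_disjoint // mulrA ler_peMl ?expect_ge0 //.
have := @prod_1subr_ge _ _ (index_enum T) (fun t => t \in D) p (fun t _ => p01 t); lra.
Qed.
End BernoulliProduct.

(** * The shadow distribution *)

Section Weights.
Variables (m k : nat) (R : realFieldType).
Implicit Types (e g : Edg m).

Lemma invr_nat_le1 n : (n%:R : R)^-1 <= 1.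
Proof. by case: n => [|n]; rewrite ?invr0 ?ler01 // invf_le1 ?ltr0Sn // ler1n. Qed.

Lemma xw_ge0 e : 0 <= xw k R e.
Proof. by rewrite /xw; case: ifP => // _; case: ifP => _; rewrite invr_ge0 ?mulr_ge0. Qed.

Lemma xw_le e : xw k R e <= ('C(m - k, k)%:R)^-1.
Proof.
rewrite /xw; case: ifP => _; last by rewrite invr_ge0.
case: ifP => // _; rewrite invfM ler_piMr ?invr_ge0 ?invr_nat_le1 //.
Qed.

Lemma xw_le1 e : xw k R e <= 1.
Proof. exact: le_trans (xw_le e) (invr_nat_le1 _). Qed.

Lemma xs_ge0 g e : 0 <= xs k R g e.
Proof.
rewrite /xs; do !case: ifP => _ //; by rewrite ?invr_ge0 ?divr_ge0.
Qed.

Lemma xs_le1 g e : xs k R g e <= 1.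
Proof.
rewrite /xs; do !case: ifP => _ //; rewrite ?invr_nat_le1 //.
rewrite -[leRHS]mulr1 ler_pM ?invr_ge0 ?divr_ge0 ?invr_nat_le1 //.
have [->|C_gt0] := posnP 'C(m, k); first by rewrite invr0 mulr0.
by rewrite ler_pdivrMr ?ltr0n // mul1r ler_nat leq_bin2l ?leq_subr.
Qed.

Lemma xs_neq0_feeds g e : xs k R g e != 0 -> feeds k g e.
Proof.
rewrite /xs /feeds; case: (isE k g) (isE k e) => [] [] /=; try by rewrite eqxx.
case: (eqVneq e g) => [-> // | _].
by do !case: ifP => //= _; rewrite ?eqxx ?orbT.
Qed.
End Weights.

Section Shadow.
Variables (m k : nat) (R : realFieldType).
Implicit Types (e g h : Edg m) (om : Omega m) (D : {set Edg m}) (F G : Omega m -> R).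

Definition shadow_weight (f : {ffun Edg m -> {set Edg m}}) : R :=
  \prod_e \prod_e' (if e' \in f e then xs k R e e' else 1 - xs k R e e').

Local Notation wt := (bweight (xw k R) shadow_weight).
Local Notation E := (expect (xw k R) shadow_weight).

Lemma xw01 e : 0 <= xw k R e <= 1. Proof. by rewrite xw_ge0 xw_le1. Qed.

Lemma shadow_weight_ge0 f : 0 <= shadow_weight f.
Proof.
apply: prodr_ge0 => e _; apply: prodr_ge0 => e' _.
by case: ifP; rewrite ?xs_ge0 ?subr_ge0 ?xs_le1.
Qed.

Lemma ler_E F G : (forall om, wt om != 0 -> F om <= G om) -> E F <= E G.
Proof. exact: (ler_expect xw01 shadow_weight_ge0 (F := F) (G := G)). Qed.

Lemma E_ge0 F : (forall om, 0 <= F om) -> 0 <= E F.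
Proof. exact: (expect_ge0 xw01 shadow_weight_ge0 (F := F)). Qed.

Lemma feeds_shadow om g e : wt om != 0 -> e \in om.2 g -> feeds k g e.
Proof.
rewrite mulf_eq0 negb_or => /andP[_ /prodf_neq0 /(_ g isT) /prodf_neq0 /(_ e isT)] + ge.
by rewrite ge => /xs_neq0_feeds.
Qed.

Lemma mem_Aset om g e : g \in om.1 -> e \in om.2 g -> e \in Aset om.
Proof. by move=> gS eg; apply/bigcupP; exists g. Qed.

Lemma CondE_expect (X : Omega m -> nat) (ev : Omega m -> bool) :
  CondE k R X ev = E (fun om => (X om)%:R * (ev om)%:R) / Prob k R ev.
Proof. by rewrite /CondE; congr (_ / _); apply: eq_bigr => om _; rewrite mulrA. Qed.

Section Vertex.
Variables (v : Vtx m) (e1 : Edg m).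

Definition relevant := \bigcup_(e in e1 |: out_edges k v) contributors k e.

Definition hits h om := #|out_edges k v :&: om.2 h|.

Definition cntA'_at h om : nat := (h \in om.1) * hits h om.

Lemma cntA'E om : cntA' k v om = (\sum_h cntA'_at h om)%N.
Proof.
rewrite /cntA' /multA'; under [LHS]eq_bigr do rewrite -sum1_card big_mkcond.
rewrite exchange_big /=; apply: eq_bigr => h _; rewrite /cntA'_at /hits -sum1_card big_distrr /=.
rewrite [LHS]big_mkcond [RHS]big_mkcond /=; apply: eq_bigr => e _; rewrite !inE.
by case: (h \in om.1); case: (isE k e && _); case: (e \in om.2 h).
Qed.

Lemma hits_leq_cntA h om : h \in om.1 -> (hits h om <= cntA k v om)%N.
Proof.
move=> hS; apply/subset_leq_card/subsetP=> e; rewrite !inE => /andP[/andP[eE ev] eh].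
by rewrite (mem_Aset hS eh) eE.
Qed.

Lemma mem_relevant g e : e \in e1 |: out_edges k v -> feeds k g e -> g \in relevant.
Proof. by move=> eD ge; apply/bigcupP; exists e; rewrite // inE. Qed.

Lemma hits_eq0 h om : wt om != 0 -> h \notin relevant -> hits h om = 0%N.
Proof.
move=> w0 hR; apply/eqP; rewrite cards_eq0 -subset0; apply/subsetP=> e; rewrite !inE.
case/andP=> eE /(feeds_shadow w0) he; case/negP: hR; apply: (mem_relevant _ he).
by rewrite !inE eE orbT.
Qed.

Lemma cntA'_at_toggle g h om : g != h -> cntA'_at h (toggle g om) = cntA'_at h om.
Proof. by move=> gh; rewrite /cntA'_at in_toggle_neq // eq_sym. Qed.

(* Only relevant edges of [S] contribute, each at most [cntA]; if three of them lie in
   [S], every indicator vanishes. *)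
Lemma sum_cntA'_at_card_le1 om : wt om != 0 ->
  (\sum_h cntA'_at h om * (#|(relevant :\ h) :&: om.1| <= 1) <= 2 * cntA k v om)%N.
Proof.
move=> w0; set P := relevant :&: om.1.
have le_at h : (cntA'_at h om * (#|(relevant :\ h) :&: om.1| <= 1)
                  <= (h \in P) * cntA k v om * (#|P| <= 2))%N.
  rewrite /cntA'_at inE; case hS: (h \in om.1); last by rewrite andbF.
  case hR: (h \in relevant); last by rewrite hits_eq0 ?hR.
  have -> : #|P| = #|(relevant :\ h) :&: om.1|.+1.
    rewrite (cardsD1 h P) !inE hR hS; congr _.+1; apply: eq_card => x; rewrite !inE.
    by rewrite andbA.
  by rewrite ltnS /= !mul1n leq_mul ?hits_leq_cntA.
apply: leq_trans; first by apply: leq_sum => h _; exact: le_at.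
rewrite -!big_distrl /= (_ : (\sum_i (i \in P))%N = #|P|); last first.
  by rewrite -sum1_card [RHS]big_mkcond; apply: eq_bigr => i _; case: (i \in P).
by case: (leqP #|P| 2) => P2; rewrite /= ?muln0 ?muln1 ?leq_mul.
Qed.

Lemma cntA'_at_shadow_le h om :
  (cntA'_at h om)%:R * (e1 \in om.2 h)%:R <= (cntA'_at h om)%:R * (e1 \in Aset om)%:R :> R.
Proof.
rewrite /cntA'_at; case hS: (h \in om.1); last by rewrite !mul0r.
by rewrite ler_wpM2l // ler_nat; case e1h: (e1 \in om.2 h); rewrite ?(mem_Aset hS e1h).
Qed.

Lemma notin_Aset h om : wt om != 0 -> [disjoint relevant :\ h & om.1] ->
  e1 \notin om.2 h -> e1 \notin Aset om.
Proof.
move=> w0 /disjoint_setI0 DS0 e1h; apply/bigcupP=> -[g gS e1g].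
have gh : g != h by apply: contraNneq e1h => <-.
have gR := mem_relevant (setU11 _ _) (feeds_shadow w0 e1g).
by have := in_set0 g; rewrite -DS0 !inE gh gR gS.
Qed.

Lemma cntA'_at_other_shadow_le h g om :
  (cntA'_at h om)%:R * (g \in om.1)%:R * (e1 \in om.2 g)%:R <=
  (cntA'_at h om)%:R * (e1 \in Aset om)%:R * (g \in om.1)%:R :> R.
Proof.
case gS: (g \in om.1); last by rewrite !mulr0 mul0r.
rewrite !mulr1 ler_wpM2l // ler_nat.
by case e1g: (e1 \in om.2 g); rewrite ?(mem_Aset gS e1g).
Qed.

(* If [e1] lies in [A] but not in [S_h], some other relevant edge of [S] put it there. *)
Lemma cntA'_at_inA_le h om : wt om != 0 ->
  (cntA'_at h om)%:R * (e1 \in Aset om)%:R <= (cntA'_at h om)%:R * (e1 \in om.2 h)%:R +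
    \sum_(g in relevant :\ h) (cntA'_at h om)%:R * (g \in om.1)%:R * (e1 \in om.2 g)%:R :> R.
Proof.
move=> w0; have sum_ge0 : 0 <= \sum_(g in relevant :\ h)
    (cntA'_at h om)%:R * (g \in om.1)%:R * (e1 \in om.2 g)%:R :> R.
  by rewrite sumr_ge0 // => g _; rewrite !mulr_ge0.
case e1h: (e1 \in om.2 h).
  by rewrite mulr1 ler_wpDr // ler_piMr // lern1 leq_b1.
case/boolP: (e1 \in Aset om) => [/bigcupP[g gS e1g] | _]; last by rewrite mulr0 add0r.
have gh : g != h by apply: contraFneq e1h => <-.
have gD : g \in relevant :\ h by rewrite !inE gh (mem_relevant (setU11 _ _) (feeds_shadow w0 e1g)).
by rewrite mulr0 add0r (bigD1 g) //= gS e1g !mulr1 lerDl sumr_ge0 // => *; rewrite !mulr_ge0.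
Qed.

Section Light.
Hypothesis relevant_light : \sum_(g in relevant) xw k R g <= 2^-1.

Lemma expect_le_disjoint_relevant D F : D \subset relevant -> (forall om, 0 <= F om) ->
  (forall t om, t \in D -> F (toggle t om) = F om) ->
  E F <= 2 * E (fun om => F om * [disjoint D & om.1]%:R).
Proof.
move=> DR; apply: (expect_le_disjoint xw01 shadow_weight_ge0).
exact: le_trans (ler_sum_subset DR (xw_ge0 k R)) relevant_light.
Qed.

Lemma expect_cntA'_at_inA h :
  E (fun om => (cntA'_at h om)%:R * (e1 \in Aset om)%:R) <=
  2 * E (fun om => (cntA'_at h om)%:R * (e1 \in Aset om)%:R *
    ([disjoint relevant :\ h & om.1]%:R +
     \sum_(g in relevant :\ h) (g \in om.1)%:R * [disjoint relevant :\ h :\ g & om.1]%:R)).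
Proof.
set D := relevant :\ h; have DR : D \subset relevant := subD1set _ _.
have at_toggle g om : g \in D -> cntA'_at h (toggle g om) = cntA'_at h om.
  by rewrite !inE => /andP[gh _]; rewrite cntA'_at_toggle.
apply: le_trans (ler_E (cntA'_at_inA_le h)) _.
rewrite expectD expect_sum (eq_expect _ _ (fun om => mulrDr _ _ _)) expectD.
rewrite (eq_expect _ _ (fun om => mulr_sumr _ _ _ _)) expect_sum mulrDr.
apply: lerD; last first.
  rewrite mulr_sumr; apply: ler_sum => g gD.
  have DgR : D :\ g \subset relevant by rewrite (subset_trans (subD1set _ _)).
  apply: le_trans (expect_le_disjoint_relevant DgR _ _) _ => [om | g' om | ].
  - by rewrite !mulr_ge0.
  - move=> g'Dg; have /andP[g'g g'D] : (g' != g) && (g' \in D) by rewrite -in_setD1.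
    by rewrite at_toggle // in_toggle_neq // eq_sym.
  rewrite ler_pM2l //; apply: ler_E => om _.
  by rewrite mulrA ler_wpM2r // cntA'_at_other_shadow_le.
apply: le_trans (expect_le_disjoint_relevant DR _ _) _ => [om | g om gD | ].
- by rewrite mulr_ge0.
- by rewrite at_toggle.
rewrite ler_pM2l //; apply: ler_E => om _.
by rewrite ler_wpM2r // cntA'_at_shadow_le.
Qed.

Lemma expect_cntA'_at_notinA h :
  E (fun om => (cntA'_at h om)%:R * (e1 \notin Aset om)%:R) <=
  2 * E (fun om => (cntA'_at h om)%:R * (e1 \notin Aset om)%:R *
                   [disjoint relevant :\ h & om.1]%:R).
Proof.
have DR : relevant :\ h \subset relevant := subD1set _ _.
apply: le_trans (ler_E (G := fun om => (cntA'_at h om)%:R * (e1 \notin om.2 h)%:R) _) _.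
  move=> om _; rewrite /cntA'_at; case hS: (h \in om.1); last by rewrite !mul0r.
  by rewrite ler_wpM2l // ler_nat; case e1h: (e1 \in om.2 h); rewrite ?(mem_Aset hS e1h) ?leq_b1.
apply: le_trans (expect_le_disjoint_relevant DR _ _) _ => [om | g om | ].
- by rewrite mulr_ge0.
- by rewrite !inE => /andP[gh _]; rewrite cntA'_at_toggle.
rewrite ler_pM2l //; apply: ler_E => om w0.
case dis: [disjoint relevant :\ h & om.1]; last by rewrite !mulr0.
rewrite ler_wpM2r // ler_wpM2l // ler_nat.
by case e1h: (e1 \in om.2 h); rewrite // (negbTE (notin_Aset w0 dis (negbT e1h))).
Qed.

Lemma expect_cntA'_at_event h b :
  E (fun om => (cntA'_at h om)%:R * (event e1 b om)%:R) <=
  2 * E (fun om => (cntA'_at h om)%:R * (event e1 b om)%:R *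
                   (#|(relevant :\ h) :&: om.1| <= 1)%N%:R).
Proof.
case: b; rewrite /event.
  under eq_expect => om do rewrite eqb_id.
  under [X in _ <= 2 * X]eq_expect => om do rewrite eqb_id.
  apply: le_trans (expect_cntA'_at_inA h) _; rewrite ler_pM2l //; apply: ler_E => om _.
  by rewrite ler_wpM2l ?mulr_ge0 //; apply: disjoint_sum_le_card_le1.
under eq_expect => om do rewrite eqbF_neg.
under [X in _ <= 2 * X]eq_expect => om do rewrite eqbF_neg.
apply: le_trans (expect_cntA'_at_notinA h) _; rewrite ler_pM2l //; apply: ler_E => om _.
rewrite ler_wpM2l ?mulr_ge0 //; apply: le_trans _ (disjoint_sum_le_card_le1 _ _ _).
by rewrite lerDl sumr_ge0 // => g _; rewrite mulr_ge0.
Qed.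

Lemma expect_cntA'_le4 b :
  E (fun om => (cntA' k v om)%:R * (event e1 b om)%:R) <=
  4 * E (fun om => (cntA k v om)%:R * (event e1 b om)%:R).
Proof.
under eq_expect => om do rewrite cntA'E natr_sum mulr_suml.
rewrite expect_sum; apply: le_trans (ler_sum _ (fun h _ => expect_cntA'_at_event h b)) _.
have four : 4 = 2 * 2 :> R by rewrite -natrM.
rewrite -mulr_sumr -expect_sum four -mulrA ler_pM2l // -expectZ.
apply: ler_E => om w0; rewrite mulrA -natrM.
apply: le_trans (_ : _ <= (\sum_h cntA'_at h om * (#|(relevant :\ h) :&: om.1| <= 1))%N%:R *
                          (event e1 b om)%:R) _.
  rewrite natr_sum mulr_suml.
  by under [X in _ <= X]eq_bigr => h _ do rewrite natrM mulrAC.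
by rewrite ler_wpM2r // ler_nat sum_cntA'_at_card_le1.
Qed.
End Light.

Lemma card_relevant : valid k v -> (v.1 : nat) = 2 -> isE k e1 ->
  (#|relevant| <= ('C(k.*2, k) + 1) * ('C(k.*2, k).*2 + 1))%N.
Proof.
move=> vv v2 e1E; apply: leq_trans (card_bigcup_leq _ _) _.
have le_e e : e \in e1 |: out_edges k v -> (#|contributors k e| <= 'C(k.*2, k).*2 + 1)%N.
  by rewrite !inE => /orP[/eqP-> | /andP[eE _]]; apply: card_contributors_leq.
apply: leq_trans; first by apply: leq_sum; exact: le_e.
rewrite sum_nat_const leq_mul2r cardsU1.
by apply/orP; right; rewrite addnC leq_add ?leq_b1 ?card_out_edges_layer2.
Qed.

Lemma sum_xw_relevant : valid k v -> (v.1 : nat) = 2 -> isE k e1 ->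
  \sum_(g in relevant) xw k R g <=
    (('C(k.*2, k) + 1) * ('C(k.*2, k).*2 + 1))%N%:R / 'C(m - k, k)%:R.
Proof.
move=> vv v2 e1E; apply: le_trans (ler_sum _ (fun g _ => xw_le k R g)) _.
by rewrite sumr_const -(mulr_natl _ #|_|) ler_wpM2r ?invr_ge0 // ler_nat card_relevant.
Qed.

Lemma cntA'_leq om K : wt om != 0 ->
  (forall e, e \in out_edges k v -> #|contributors k e| <= K)%N ->
  (cntA' k v om <= K * cntA k v om)%N.
Proof.
move=> w0 hK; have le_mult e : isE k e && (e.1 == v) -> (multA' om e <= K * (e \in Aset om))%N.
  move=> eout; case eA: (e \in Aset om); last first.
    rewrite muln0 leqn0 cards_eq0; apply/eqP/setP=> g; rewrite !inE.
    by apply/negbTE/andP=> -[gS eg]; rewrite (mem_Aset gS eg) in eA.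
  rewrite muln1; apply: leq_trans (hK e _); last by rewrite inE.
  by apply/subset_leq_card/subsetP=> g; rewrite !inE => /andP[_ /(feeds_shadow w0)].
apply: leq_trans; first by apply: leq_sum; exact: le_mult.
rewrite -big_distrr leq_mul2l /cntA -sum1_card.
rewrite [X in (_ <= X)%N]big_mkcond [X in (X <= _)%N]big_mkcond.
apply/orP; right; apply/eq_leq/eq_bigr => e _; rewrite inE.
by case: (e \in Aset om); case: (_ && _).
Qed.

Lemma expect_cntA'_le41 b : valid k v -> isE k e1 -> (20 * k <= m)%N ->
  E (fun om => (cntA' k v om)%:R * (event e1 b om)%:R) <=
  41 * E (fun om => (cntA k v om)%:R * (event e1 b om)%:R).
Proof.
move=> vv e1E km.
case: (boolP (((v.1 : nat) == 2) && (4 <= k)%N)) => [/andP[/eqP v2 k4] | small]; last first.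
  rewrite -expectZ; apply: ler_E => om w0; rewrite mulrA ler_wpM2r // -natrM ler_nat.
  by apply: cntA'_leq w0 _ => e; apply: card_contributors_out_leq.
have light : \sum_(g in relevant) xw k R g <= 2^-1.
  apply: le_trans (sum_xw_relevant vv v2 e1E) _.
  have := bin_contributors_leq k4 km; rewrite -mulnA => le2.
  have D0 : (0 < 'C(m - k, k))%N by apply: leq_trans le2; rewrite !muln_gt0 !addn1.
  by rewrite ler_pdivrMr ?ltr0n //; move: le2; rewrite -(ler_nat R) natrM; lra.
apply: le_trans (expect_cntA'_le4 light b) _; rewrite ler_wpM2r ?(ler_nat R 4 41) //.
by apply: E_ge0 => om; rewrite mulr_ge0.
Qed.
End Vertex.
End Shadow.

Theorem lemma6 (R : realFieldType) :
  exists rho0 : R, 0 < rho0 /\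
  forall rho : R, 0 < rho < rho0 ->
  exists c : R, 0 < c /\
  exists M : nat,
  forall m k : nat, (M <= m)%N -> k%:R = rho * m%:R ->
  forall (e1 : Edg m), isE k e1 ->
  forall b : bool, 0 < Prob k R (event e1 b) ->
  forall v : Vtx m, valid k v ->
    CondE k R (cntA k v) (event e1 b) >=
    c / (m%:R ^+ 4) * CondE k R (cntA' k v) (event e1 b).
Proof.
exists (1 / 20); split=> [|rho /andP[rho0 rho_lt]]; first by lra.
exists (1 / 41); split; first by lra.
exists 1%N => m k m_gt0 km e1 e1E b Pb v vv.
have le_km : (20 * k <= m)%N.
  rewrite -(ler_nat R) natrM km; have : rho * m%:R <= 1 / 20 * m%:R.
    by rewrite ler_pM2r ?ltr0n // ltW.
  lra.
have := @expect_cntA'_le41 m k R v e1 b vv e1E le_km; rewrite !CondE_expect.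
set N' := expect _ _ _; set N := expect _ _ _ => le_N'N.
have N'0 : 0 <= N' by apply: E_ge0 => om; rewrite mulr_ge0.
have m4 : 1 <= (m%:R : R) ^+ 4 by rewrite exprn_ege1 // ler1n.
rewrite mulrA ler_pM2r ?invr_gt0 //; apply: le_trans (_ : _ <= 1 / 41 * N') _; last by lra.
by rewrite ler_wpM2r // ler_pdivrMr ?(lt_le_trans ltr01 m4) //; lra.
Qed.
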